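(* Let $\mathcal{S}=\{S_1,\dots,S_N\}\subseteq 2^{[n]}$ be a nonempty Sperner family ($N\ge1$) and $h:\mathcal{S}\to 2^{[n]}$ a function with $H_i=h(S_i)\subseteq S_i$ for every $i\in[N]$. If $G_{\mathcal{S},h}$ is the complete graph on $N$ vertices, then there exists $S_0\in\mathcal{S}$ such that $\mathcal{Q}_{S_0,h(S_0)}\not\subseteq\bigcup_{S\in\mathcal{S}\setminus\{S_0\}}\mathcal{Q}_{S,h(S)}$.
   Context: $[n]=\{1,\dots,n\}$. A Sperner family is a family of sets none of which is contained in another. For $H\subseteq S\subseteq[n]$, $\mathcal{Q}_{S,H}=\{H\cup B: B\subseteq[n]\setminus S\}$. The graph $G_{\mathcal{S},h}$ has vertex set $\{(S_i,H_i): i\in[N]\}$, and two distinct vertices $(S_i,H_i)$, $(S_j,H_j)$ are adjacent if and only if $S_i\cap H_j=S_j\cap H_i$. *)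

From mathcomp Require Import all_boot.
Set Implicit Arguments. Unset Strict Implicit. Unset Printing Implicit Defensive.

Definition sperner (n : nat) (F : {set {set 'I_n}}) : Prop :=
  forall A B, A \in F -> B \in F -> A \subset B -> A = B.

Definition Qfam (n : nat) (S H : {set 'I_n}) : {set {set 'I_n}} :=
  [set H :|: B | B in powerset (~: S)].

Definition adjG (n : nat) (h : {set 'I_n} -> {set 'I_n}) (S T : {set 'I_n}) : Prop :=
  S :&: h T = T :&: h S.

Definition G_complete (n : nat) (F : {set {set 'I_n}}) (h : {set 'I_n} -> {set 'I_n}) : Prop :=
  forall S T, S \in F -> T \in F -> S <> T -> adjG h S T.

From mathcomp Require Import all_boot.

(* Any member S0 of the family works.  With U the union of all the h S, the
   set X = h S0 ∪ ([n] \ (S0 ∪ U)) lies in Q_{S0,h S0}, since X ∩ S0 = h S0.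
   Completeness of G_{S,h} forces S ∩ U = h S for every S, so X ∈ Q_{S,h S}
   would mean X ∩ S = S ∩ U; outside S0 the set X is exactly the complement
   of U, hence S ⊆ S0, and the Sperner property gives S = S0. *)

Lemma mem_Qfam {n : nat} (S H X : {set 'I_n}) :
  H \subset S -> (X \in Qfam S H) = (X :&: S == H).
Proof.
move=> HS; apply/imsetP/eqP => [[B] | XS].
  rewrite inE subsets_disjoint setCK => BS -> {X}.
  by rewrite setIUl (setIidPl HS) (disjoint_setI0 BS) setU0.
exists (X :\: S); first by rewrite inE subsetDr.
by rewrite -XS setID.
Qed.

Lemma complete_setI_bigcup {n : nat} {F : {set {set 'I_n}}}
    {h : {set 'I_n} -> {set 'I_n}} {S : {set 'I_n}} :
  G_complete F h -> S \in F -> h S \subset S ->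
  S :&: \bigcup_(T in F) h T = h S.
Proof.
move=> Fh SF hS; apply/eqP.
rewrite eqEsubset [h S \subset _]subsetI hS (bigcup_sup S SF) !andbT.
apply/subsetP => i /setIP [iS /bigcupP [T TF iT]].
have [<- // | /eqP TS] := eqVneq T S.
have : i \in S :&: h T by rewrite inE iS.
by rewrite (Fh S T SF TF (nesym TS)) => /setIP [].
Qed.

Lemma subset_of_setI_separator {n : nat} {S0 H U S : {set 'I_n}} :
  H \subset S0 -> (H :|: (~: S0 :\: U)) :&: S = S :&: U -> S \subset S0.
Proof.
move=> HS0 /setP XS; apply/subsetP => i iS; apply/negPn/negP => iS0.
have iH : i \notin H by apply: contra iS0; apply: (subsetP HS0).
by move: (XS i); rewrite !inE iS iS0 (negbTE iH) /=; case: (i \in U).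
Qed.

Theorem claim20 (n : nat) (F : {set {set 'I_n}}) (h : {set 'I_n} -> {set 'I_n}) :
  F != set0 ->
  sperner F ->
  (forall S, S \in F -> h S \subset S) ->
  G_complete F h ->
  exists2 S0, S0 \in F &
    ~~ (Qfam S0 (h S0) \subset \bigcup_(S in F :\ S0) Qfam S (h S)).
Proof.
move=> /set0Pn [S0 S0F] spF hF Fh; exists S0 => //.
set U := \bigcup_(T in F) h T.
set X := h S0 :|: (~: S0 :\: U).
have XQ0 : X \in Qfam S0 (h S0).
  rewrite mem_Qfam ?hF // setIUl (setIidPl (hF S0 S0F)) setDE setIAC.
  by rewrite [~: S0 :&: S0]setIC setICr set0I setU0.
apply/negP => /subsetP /(_ X XQ0) /bigcupP [S /setD1P [SS0 SF]].
rewrite mem_Qfam ?hF // -(complete_setI_bigcup Fh SF (hF S SF)) => /eqP XS.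
have SsubS0 := subset_of_setI_separator (hF S0 S0F) XS.
by rewrite (spF S S0 SF S0F SsubS0) eqxx in SS0.
Qed.
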